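(* Let $F$ and $G$ be connected finite simple graphs such that $G$ is a $k$-fold cover of $F$. Then $\gamma_c(G) \leq k(\gamma_c(F) + 2) - 2$. Moreover, this bound is tight: for every positive integer $k$ there exist connected graphs $F$ and $G$ with $G$ a $k$-fold cover of $F$ such that $\gamma_c(G) = k(\gamma_c(F)+2) - 2$.
   Context: All graphs are finite, simple and undirected. A graph $G$ is a cover of a graph $F$ if there is an onto map $\pi: V(G)\to V(F)$ such that for every vertex $v$ of $G$, $\pi$ maps the neighbours of $v$ in $G$ bijectively onto the neighbours of $\pi(v)$ in $F$; the cover is $k$-fold if every fibre $\pi^{-1}(u)$ has exactly $k$ vertices. A connected dominating set of a graph is a set $S$ of vertices such that every vertex not in $S$ is adjacent to some vertex of $S$ and the subgraph induced by $S$ is connected; $\gamma_c(\cdot)$ denotes the connected domination number, the minimum size of a connected dominating set (defined for connected graphs). *)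

From mathcomp Require Import all_boot.
Set Implicit Arguments. Unset Strict Implicit. Unset Printing Implicit Defensive.

Definition simple_graph (T : finType) (e : rel T) : Prop :=
  symmetric e /\ irreflexive e.

Definition connected_graph (T : finType) (e : rel T) : Prop :=
  (0 < #|T|)%N /\ forall x y : T, connect e x y.

Definition induced_rel (T : finType) (e : rel T) (S : {set T}) : rel T :=
  [rel u v | [&& u \in S, v \in S & e u v]].

Definition dominating (T : finType) (e : rel T) (S : {set T}) : bool :=
  [forall v, (v \in S) || [exists u in S, e v u]].

Definition induced_connected (T : finType) (e : rel T) (S : {set T}) : bool :=
  [forall x in S, forall y in S, connect (induced_rel e S) x y].

Definition connected_dominating (T : finType) (e : rel T) (S : {set T}) : bool :=
  dominating e S && induced_connected e S.

(* connected domination number: minimum size of a connected dominating set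
   (for a connected graph, [set: T] is one, so the default #|T| is harmless) *)
Definition gamma_c (T : finType) (e : rel T) : nat :=
  \big[minn/#|T|]_(S : {set T} | connected_dominating e S) #|S|.

Definition covering_map (TG TF : finType) (eG : rel TG) (eF : rel TF)
    (pi : TG -> TF) : Prop :=
  (forall x : TF, exists y : TG, pi y = x) /\
  (forall v : TG,
     {in [set u | eG v u] &, injective pi} /\
     pi @: [set u | eG v u] = [set w | eF (pi v) w]).

Definition k_fold_cover (k : nat) (TG TF : finType) (eG : rel TG) (eF : rel TF)
    : Prop :=
  exists pi : TG -> TF, covering_map eG eF pi /\
    forall x : TF, #|[set y | pi y == x]| = k.

(* Let D be a minimum connected dominating set of F and P its preimage in G,
   of size k |D|. P dominates G, and lifting paths of F[D] shows that every
   component of G[P] meets the fibre over a fixed vertex of D, so G[P] has at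
   most k components. As P dominates the connected graph G, some two components
   are joined by a path with at most two inner vertices; adding these merges
   them, and k - 1 such steps give a connected dominating set of size at most
   k |D| + 2 (k - 1).
   For tightness, C_3k is a k-fold cover of K_3: a connected proper subset of a
   cycle is an arc, and a dominating arc misses at most two vertices, so
   gamma_c (C_3k) = 3k - 2 = k (gamma_c (K_3) + 2) - 2. *)

From mathcomp Require Import all_boot order ssralg zmodp zify.
Set Implicit Arguments. Unset Strict Implicit. Unset Printing Implicit Defensive.

Import GRing.Theory.

Lemma connect_fwd_closed (T : finType) (e : rel T) (A : T -> Prop) x y :
  (forall a b, A a -> e a b -> A b) -> connect e x y -> A x -> A y.
Proof.
move=> clA /connectP[p + ->]; elim: p x => //= z p IHp x /andP[exz pz] Ax.
exact: IHp pz (clA _ _ Ax exz).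
Qed.

Lemma card_setC2 (T : finType) (a b : T) : a != b -> #|~: [set a; b]| = #|T| - 2.
Proof. by move=> ab; rewrite cardsCs setCK cards2 ab. Qed.

Lemma card_preimset_fibres (A B : finType) (f : A -> B) k (D : {set B}) :
  (forall x, #|[set y | f y == x]| = k) -> #|f @^-1: D| = k * #|D|.
Proof.
move=> fibres.
rewrite -sum1_card (partition_big f (mem D)) => [|y]; last by rewrite inE.
rewrite mulnC -sum_nat_const; apply: eq_bigr => x xD.
rewrite -(fibres x) -sum1_card; apply: eq_bigl => y.
by rewrite !inE; case: eqP => [->|_]; rewrite ?andbT ?andbF.
Qed.

Section Domination.

Variables (T : finType) (e : rel T).
Implicit Types S : {set T}.

(* [minn] is convertible to [Order.min] on [nat]. *)
Lemma gamma_c_le_card S : connected_dominating e S -> gamma_c e <= #|S|.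
Proof. exact: (@Order.TotalTheory.bigmin_le_cond _ nat). Qed.

Lemma leq_gamma_c b :
  b <= #|T| -> (forall S, connected_dominating e S -> b <= #|S|) -> b <= gamma_c e.
Proof.
move=> bT bS; apply: (big_ind (leq b)) => // x y le_bx le_by.
by rewrite leq_min le_bx.
Qed.

Lemma connected_dominating_setT : connected_graph e -> connected_dominating e setT.
Proof.
move=> [_ conn]; apply/andP; split; first by apply/forallP => v; rewrite in_setT.
apply/forallP => x; apply/implyP => _; apply/forallP => y; apply/implyP => _.
apply: connect_sub (conn x y) => a b ab.
by apply: connect1; rewrite /induced_rel /= !in_setT.
Qed.

Lemma gamma_c_witness :
  connected_graph e -> exists2 S, connected_dominating e S & #|S| = gamma_c e.
Proof.
move=> conn.
apply: (big_ind (fun m => exists2 S, connected_dominating e S & #|S| = m)).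
- by exists setT; [exact: connected_dominating_setT | rewrite cardsT].
- move=> _ _ [S1 cd1 <-] [S2 cd2 <-]; rewrite /minn.
  by case: ltnP => _; [exists S1 | exists S2].
- by move=> S cdS; exists S.
Qed.

Lemma dominating_card_gt0 S : 0 < #|T| -> dominating e S -> 0 < #|S|.
Proof.
case/card_gt0P=> v _ /forallP/(_ v)/orP[vS | /existsP[u /andP[uS _]]];
  by apply/card_gt0P; eexists; eassumption.
Qed.

Lemma dominating_subset S S' : S \subset S' -> dominating e S -> dominating e S'.
Proof.
move=> sSS' /forallP domS; apply/forallP => v.
case/orP: (domS v) => [vS | /existsP[u /andP[uS vu]]]; first by rewrite (subsetP sSS').
by apply/orP; right; apply/existsP; exists u; rewrite (subsetP sSS') ?vu.
Qed.

Lemma induced_rel_sym S : symmetric e -> symmetric (induced_rel e S).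
Proof. by move=> sym x y; rewrite /induced_rel /= sym andbCA. Qed.

Lemma connect_induced_subset S S' x y : S \subset S' ->
  connect (induced_rel e S) x y -> connect (induced_rel e S') x y.
Proof.
move=> sSS'; apply: connect_sub => a b /and3P[aS bS ab].
by apply: connect1; rewrite /induced_rel /= !(subsetP sSS') ?ab.
Qed.

Lemma connected_dominating_preimset (f : T -> T) S :
    bijective f -> (forall x y, e (f x) (f y) = e x y) ->
  connected_dominating e S -> connected_dominating e (f @^-1: S).
Proof.
move=> [g fK gK] ef /andP[/forallP domS /forallP connS]; apply/andP; split.
  apply/forallP => v; rewrite inE.
  case/orP: (domS (f v)) => [-> // | /existsP[u /andP[uS vu]]].
  by apply/orP; right; apply/existsP; exists (g u); rewrite inE gK uS -ef gK.
apply/forallP => x; apply/implyP; rewrite inE => xS.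
apply/forallP => y; apply/implyP; rewrite inE => yS.
have /forallP/(_ (f y))/implyP/(_ yS) fx_fy := implyP (connS (f x)) xS.
pose reached z := connect (induced_rel e (f @^-1: S)) x (g z).
have := connect_fwd_closed (A := reached) _ fx_fy; rewrite /reached !fK.
apply=> [a b x_a /and3P[aS bS ab] |]; last exact: connect0.
apply: connect_trans x_a (connect1 _).
by rewrite /induced_rel /= !inE !gK aS bS -ef !gK.
Qed.

End Domination.

Section Components.

Variables (T : finType) (e : rel T).
Hypotheses (e_sym : symmetric e) (e_conn : connected_graph e).
Implicit Types S R C : {set T}.

Definition near x y := (x == y) || e x y.

Lemma near_sym : symmetric near.
Proof. by move=> x y; rewrite /near eq_sym e_sym. Qed.

Lemma connect_near S x y :
  x \in S -> y \in S -> near x y -> connect (induced_rel e S) x y.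
Proof.
move=> xS yS /orP[/eqP-> | xy]; first exact: connect0.
by apply: connect1; rewrite /induced_rel /= xS yS.
Qed.

Let induced_connect_sym S := sym_connect_sym (induced_rel_sym S e_sym).

Definition components_meet S R :=
  forall s, s \in S -> exists2 r, r \in R & connect (induced_rel e S) r s.

Lemma components_meet_connected S R :
  #|R| <= 1 -> components_meet S R -> induced_connected e S.
Proof.
move=> R_le1 meetSR; apply/forallP => x; apply/implyP => xS.
apply/forallP => y; apply/implyP => yS.
have [rx rxR rx_x] := meetSR x xS; have [ry ryR ry_y] := meetSR y yS.
have rxy : ry = rx := card_le1_eqP R_le1 _ _ rxR ryR.
rewrite -rxy induced_connect_sym in rx_x.
exact: connect_trans rx_x ry_y.
Qed.

(* Every vertex is near C or near S :\: C, so a walk from c to d steps from a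
   vertex near C to a vertex near S :\: C. *)
Lemma dominating_bridge S C c d : dominating e S -> c \in C -> d \in S :\: C ->
  exists a x y b, [/\ a \in C, b \in S :\: C, near a x, near x y & near y b].
Proof.
move=> /forallP domS cC dD.
pose nearC z := [exists a in C, near a z].
pose nearD z := [exists b in S :\: C, near z b].
suff /existsP[x /existsP[y /and3P[/existsP[a /andP[aC ax]] xy]]] :
    [exists x, exists y, [&& nearC x, near x y & nearD y]].
  by case/existsP=> b /andP[bD yb]; exists a, x, y, b.
apply: contraT => no_bridge.
have closedC z w : nearC z -> e z w -> nearC w.
  move=> Cz zw; have [s sS ws] : exists2 s, s \in S & near w s.
    case/orP: (domS w) => [wS | /existsP[s /andP[sS ws]]].
      by exists w; rewrite /near ?eqxx.
    by exists s; rewrite /near ?ws ?orbT.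
  have [sC | sNC] := boolP (s \in C); first by apply/existsP; exists s; rewrite sC near_sym.
  case/negP: no_bridge; apply/existsP; exists z; apply/existsP; exists w.
  by rewrite Cz /near zw orbT; apply/existsP; exists s; rewrite !inE sNC sS.
have Cd : nearC d.
  apply: connect_fwd_closed closedC (e_conn.2 c d) _.
  by apply/existsP; exists c; rewrite cC /near eqxx.
case/negP: no_bridge; apply/existsP; exists d; apply/existsP; exists d.
by rewrite Cd /near eqxx; apply/existsP; exists d; rewrite dD /near eqxx.
Qed.

Lemma components_meet_merge S S' R r r' :
    components_meet S R -> S \subset S' -> r \in R -> r != r' ->
    connect (induced_rel e S') r r' ->
    (forall s, s \in S' -> s \notin S -> connect (induced_rel e S') r s) ->
  components_meet S' (R :\ r').
Proof.
move=> meetSR sSS' rR rr' r_r' new s s_S'.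
have rR' : r \in R :\ r' by rewrite !inE rr' rR.
have [sS | sNS] := boolP (s \in S); last by exists r; last exact: new.
have [q qR /(connect_induced_subset sSS') q_s] := meetSR s sS.
have [qr' | qr'] := eqVneq q r'; last by exists q; rewrite // !inE qr' qR.
by exists r => //; apply: connect_trans r_r' _; rewrite -qr'.
Qed.

Lemma components_meet_grow S R :
    dominating e S -> components_meet S R -> ~~ induced_connected e S ->
  exists S' R', [/\ dominating e S', components_meet S' R',
                    #|S'| <= #|S| + 2 & #|R'| < #|R|].
Proof.
move=> domS meetSR /forallPn[x0]; rewrite negb_imply => /andP[x0S /forallPn[y0]].
rewrite negb_imply => /andP[y0S not_x0_y0].
have [r rR r_x0] := meetSR x0 x0S.
pose C := [set s in S | connect (induced_rel e S) r s].
have x0C : x0 \in C by rewrite inE x0S r_x0.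
have y0D : y0 \in S :\: C.
  rewrite !inE y0S andbT; apply: contra not_x0_y0 => r_y0.
  by rewrite induced_connect_sym in r_x0; exact: connect_trans r_x0 r_y0.
have [a [x [y [b [aC bD ax xy yb]]]]] := dominating_bridge domS x0C y0D.
move: aC bD; rewrite !inE => /andP[aS r_a] /andP[bNC bS].
have [r' r'R r'_b] := meetSR b bS.
have rr' : r != r'.
  by apply: contraNneq bNC => ->; rewrite bS.
pose S' := S :|: [set x; y].
have sSS' : S \subset S' := subsetUl S _.
have [xS' yS'] : x \in S' /\ y \in S' by rewrite !inE !eqxx !orbT.
have r_x : connect (induced_rel e S') r x.
  apply: connect_trans (connect_induced_subset sSS' r_a) (connect_near _ xS' ax).
  exact: (subsetP sSS').
have r_y : connect (induced_rel e S') r y := connect_trans r_x (connect_near xS' yS' xy).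
have r_r' : connect (induced_rel e S') r r'.
  apply: connect_trans r_y (connect_trans (connect_near yS' (subsetP sSS' _ bS) yb) _).
  by rewrite induced_connect_sym; exact: connect_induced_subset sSS' r'_b.
exists S', (R :\ r'); split.
- exact: dominating_subset sSS' domS.
- apply: components_meet_merge meetSR sSS' rR rr' r_r' _ => s.
  by rewrite !inE => /orP[-> // | /orP[] /eqP->].
- by rewrite (leq_trans (leq_card_setU _ _)) // leq_add2l cards2; case: (x != y).
- by rewrite (cardsD1 r' R) r'R.
Qed.

Lemma gamma_c_le_components n S R :
    #|R| <= n.+1 -> dominating e S -> components_meet S R ->
  gamma_c e <= #|S| + 2 * n.
Proof.
elim: n S R => [|n IHn] S R R_le domS meetSR.
  have conS := components_meet_connected R_le meetSR.
  by rewrite muln0 addn0 gamma_c_le_card // /connected_dominating domS conS.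
have [conS | disS] := boolP (induced_connected e S).
  apply: leq_trans (leq_addr (2 * n.+1) _); apply: gamma_c_le_card.
  by rewrite /connected_dominating domS conS.
have [S' [R' [domS' meetS'R' S'_le R'_lt]]] := components_meet_grow domS meetSR disS.
have R'_le : #|R'| <= n.+1 by rewrite -ltnS (leq_trans R'_lt R_le).
by apply: leq_trans (IHn S' R' R'_le domS' meetS'R') _; lia.
Qed.

End Components.

Section CoveringMap.

Variables (TG TF : finType) (eG : rel TG) (eF : rel TF) (pi : TG -> TF).
Hypothesis pi_cover : covering_map eG eF pi.
Implicit Types D : {set TF}.

Lemma covering_map_lift v w : eF (pi v) w -> exists2 u, eG v u & pi u = w.
Proof.
move=> vw; have : w \in [set w | eF (pi v) w] by rewrite inE.
by rewrite -(pi_cover.2 v).2 => /imsetP[u]; rewrite inE => vu ->; exists u.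
Qed.

Lemma dominating_preimset D : dominating eF D -> dominating eG (pi @^-1: D).
Proof.
move=> /forallP domD; apply/forallP => v; rewrite inE.
case/orP: (domD (pi v)) => [-> // | /existsP[w /andP[wD vw]]].
have [u vu uw] := covering_map_lift vw.
by apply/orP; right; apply/existsP; exists u; rewrite inE uw wD.
Qed.

Lemma connect_lift D y z : connect (induced_rel eF D) (pi y) z ->
  exists2 y', pi y' = z & connect (induced_rel eG (pi @^-1: D)) y y'.
Proof.
pose lifts z := exists2 y', pi y' = z & connect (induced_rel eG (pi @^-1: D)) y y'.
move=> y_z; apply: (connect_fwd_closed (A := lifts) _ y_z); last by exists y.
move=> _ w [y' <- y_y'] /and3P[y'D wD y'w].
have [u y'u uw] := covering_map_lift y'w.
exists u => //; apply: connect_trans y_y' (connect1 _).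
by rewrite /induced_rel /= !inE y'D uw wD y'u.
Qed.

Lemma components_meet_preimset D d :
    symmetric eG -> induced_connected eF D -> d \in D ->
  components_meet eG (pi @^-1: D) [set y | pi y == d].
Proof.
move=> eG_sym /forallP connD dD s; rewrite inE => sD.
move/implyP: (connD (pi s)) => /(_ sD)/forallP/(_ d)/implyP/(_ dD).
case/connect_lift => y' y'd s_y'; exists y'; first by rewrite inE y'd.
by rewrite (sym_connect_sym (induced_rel_sym _ eG_sym)).
Qed.

End CoveringMap.

Lemma gamma_c_cover_le k (TF TG : finType) (eF : rel TF) (eG : rel TG) :
    symmetric eG -> connected_graph eF -> connected_graph eG ->
    k_fold_cover k eG eF ->
  gamma_c eG <= k * (gamma_c eF + 2) - 2.
Proof.
move=> eG_sym eF_conn eG_conn [pi [pi_cover fibres]].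
have [D /andP[domD connD] <-] := gamma_c_witness eF_conn.
have /card_gt0P[d dD] := dominating_card_gt0 eF_conn.1 domD.
have := gamma_c_le_components eG_sym eG_conn (n := k.-1) _
  (dominating_preimset pi_cover domD)
  (components_meet_preimset pi_cover eG_sym connD dD).
rewrite fibres (card_preimset_fibres _ fibres) => /(_ (leqSpred k)).
by case: k {fibres} => /=; lia.
Qed.

(* The cycle C_(n+3): the Cayley graph of Z/(n+3) = 'I_n.+3 with generator 1. *)
Definition cycle_graph n : rel 'I_n.+3 :=
  fun x y => (y == x + 1)%R || (x == y + 1)%R.
Arguments cycle_graph : clear implicits.

Section Cycle.

Variable n : nat.
Local Notation C := (cycle_graph n).
Implicit Types (v x y z r b : 'I_n.+3) (S : {set 'I_n.+3}).

Lemma val_add1 x : (x + 1)%R = (if x == n.+2 :> nat then 0 else x.+1) :> nat.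
Proof.
rewrite /= (@modn_small 1) // addn1; case: eqP => [->|x_max]; first exact: modnn.
by rewrite modn_small //; have := ltn_ord x; lia.
Qed.

Lemma cycle_graphE x y : C x y =
  [|| y == x.+1 :> nat, x == y.+1 :> nat,
      (x == n.+2 :> nat) && (y == 0 :> nat) | (y == n.+2 :> nat) && (x == 0 :> nat)].
Proof.
have eqE (u v : 'I_n.+3) : (u == v) = (u == v :> nat) by [].
rewrite /cycle_graph !eqE !val_add1.
by have := ltn_ord x; have := ltn_ord y; do 2 case: ifP => ?; lia.
Qed.

Lemma cycle_graph_simple : simple_graph C.
Proof.
split=> [x y | x]; first by rewrite /cycle_graph orbC.
by rewrite cycle_graphE; have := ltn_ord x; lia.
Qed.

Lemma cycle_graph_sym : symmetric C.
Proof. exact: cycle_graph_simple.1. Qed.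

Lemma cycle_graph_addr r x y : C (x + r)%R (y + r)%R = C x y.
Proof. by rewrite /cycle_graph !(addrAC _ r 1%R) !(inj_eq (addIr r)). Qed.

Lemma connect_cycle_prefix S b :
  (forall z : 'I_n.+3, z <= b -> z \in S) -> connect (induced_rel C S) ord0 b.
Proof.
case: b => m; elim: m => [|m IHm] lt_m prefS; first exact: eq_connect0 (val_inj _).
have lt_m' := ltnW lt_m.
apply: connect_trans (IHm lt_m' _) (connect1 _) => [z zm | ].
  exact: prefS (leq_trans zm (leqnSn m)).
by apply/and3P; split; [apply: prefS; exact: leqnSn | exact: prefS |
  rewrite cycle_graphE /= eqxx].
Qed.

Lemma cycle_graph_connected : connected_graph C.
Proof.
split=> [|x y]; first by rewrite card_ord.
have from0 z : connect C ord0 z.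
  apply: connect_sub (connect_cycle_prefix (S := setT) _) => [a b | w _].
    by case/and3P=> _ _ /connect1.
  exact: in_setT.
by apply: connect_trans (from0 y); rewrite (sym_connect_sym cycle_graph_sym).
Qed.

Lemma gamma_c_cycle_le : gamma_c C <= n.+1.
Proof.
have max_n1 : (ord_max : 'I_n.+3) != inord n.+1.
  by apply/eqP => /(congr1 val); rewrite /= inordK //; lia.
pose S : {set 'I_n.+3} := ~: [set ord_max; inord n.+1].
have inS z : (z \in S) = (z <= n).
  by rewrite !inE -!val_eqE /= inordK //; have := ltn_ord z; lia.
have cdS : connected_dominating C S.
  apply/andP; split.
    apply/forallP => v; rewrite inS; case: leqP => //= vn; apply/existsP.
    exists (if v == n.+1 :> nat then inord n else ord0).
    rewrite inS cycle_graphE.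
    by case: eqP => /= [->|]; rewrite ?inordK //; have := ltn_ord v; lia.
  apply/forallP => x; apply/implyP => xS; apply/forallP => y; apply/implyP => yS.
  have from0 z : z \in S -> connect (induced_rel C S) ord0 z.
    by rewrite inS => zn; apply: connect_cycle_prefix => w wz; rewrite inS; lia.
  apply: connect_trans (from0 y yS).
  by rewrite (sym_connect_sym (induced_rel_sym _ cycle_graph_sym)) from0.
by rewrite (leq_trans (gamma_c_le_card cdS)) // card_setC2 // card_ord.
Qed.

Section AvoidingMax.

Variable S : {set 'I_n.+3}.
Hypotheses (S_max : ord_max \notin S) (S_conn : induced_connected C S).

Lemma val_lt_max z : z \in S -> z < n.+2.
Proof.
move=> zS; rewrite ltn_neqAle -ltnS ltn_ord andbT.
by apply: contraNneq S_max => z_max; rewrite (_ : ord_max = z) //; exact: val_inj.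
Qed.

(* Without [ord_max] the cycle is a path, whose connected subsets are intervals. *)
Lemma cycle_convex x y z : x \in S -> y \in S -> x <= z <= y -> z \in S.
Proof.
move=> xS yS /andP[xz zy]; apply: contraT => zNS.
have x_lt_z : x < z by rewrite ltn_neqAle xz andbT; apply: contraNneq zNS => /val_inj <-.
have /forallP/(_ y)/implyP/(_ yS) x_y := implyP (forallP S_conn x) xS.
suff : y < z by rewrite ltnNge zy.
apply: (connect_fwd_closed (A := fun w : 'I_n.+3 => w < z) _ x_y x_lt_z).
move=> a b a_z /and3P[aS bS]; rewrite cycle_graphE.
have bz : b != z :> nat by apply: contraNneq zNS => /val_inj <-.
by have := val_lt_max aS; have := val_lt_max bS; lia.
Qed.

Hypothesis S_dom : dominating C S.

Lemma cycle_dominated v : exists2 s, s \in S & (s == v :> nat) || C v s.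
Proof.
case/orP: (forallP S_dom v) => [vS | /existsP[s /andP[sS vs]]].
  by exists v; rewrite ?eqxx.
by exists s; rewrite ?vs ?orbT.
Qed.

(* [S] contains all vertices but [ord_max] and one of its two neighbours. *)
Lemma cycle_cds_card_avoiding_max : n.+1 <= #|S|.
Proof.
suff [a a_max sub] : exists2 a : 'I_n.+3, a != ord_max & ~: [set a; ord_max] \subset S.
  by apply: leq_trans (subset_leq_card sub); rewrite card_setC2 // card_ord.
have [u uS] := cycle_dominated ord_max; rewrite cycle_graphE /= => max_u.
have u_lt := val_lt_max uS; have [u0 | u_n1] : u = 0 :> nat \/ u = n.+1 :> nat by lia.
- have [c cS] := cycle_dominated (inord n.+1); rewrite cycle_graphE !inordK // => c_n.
  have c_lt := val_lt_max cS; exists (inord n.+1).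
    by apply/eqP => /(congr1 val); rewrite /= inordK //; lia.
  apply/subsetP => z; rewrite !inE -!val_eqE /= inordK // => /norP[z_n1 z_max].
  by apply: (cycle_convex uS cS); have := ltn_ord z; lia.
- have [c cS] := cycle_dominated ord0; rewrite cycle_graphE /= => c_0.
  have c_lt := val_lt_max cS; exists ord0; first by rewrite -val_eqE.
  apply/subsetP => z; rewrite !inE -!val_eqE /= => /norP[z_0 z_max].
  by apply: (cycle_convex cS uS); have := ltn_ord z; lia.
Qed.

End AvoidingMax.

Lemma cycle_cds_card S : connected_dominating C S -> n.+1 <= #|S|.
Proof.
move=> cdS; have [S_full | [u uNS]] := set_0Vmem (~: S).
  by have := cardsC S; rewrite S_full cards0 addn0 card_ord => ->; lia.
pose shift x := (x + (u + 1))%R.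
have shift_bij : bijective shift.
  by exists (fun x => x - (u + 1))%R; [exact: addrK | exact: subrK].
have max_shift : ord_max \notin shift @^-1: S.
  have max1 : (ord_max + 1 = 0 :> 'I_n.+3)%R.
    by apply: ord_inj; rewrite val_add1 /= eqxx.
  by rewrite inE /shift addrCA max1 addr0 -in_setC.
have /andP[domS' connS'] :=
  connected_dominating_preimset shift_bij (@cycle_graph_addr _) cdS.
by rewrite -(card_preimset S (bij_inj shift_bij)) cycle_cds_card_avoiding_max.
Qed.

Lemma gamma_c_cycle : gamma_c C = n.+1.
Proof.
apply/anti_leq; rewrite gamma_c_cycle_le leq_gamma_c // => [|S].
  by rewrite card_ord; lia.
exact: cycle_cds_card.
Qed.

End Cycle.

Definition K3 : rel 'I_3 := fun a b => a != b.

Lemma K3_simple : simple_graph K3.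
Proof. by split=> [a b | a]; rewrite /K3 ?eqxx // eq_sym. Qed.

Lemma K3_connected : connected_graph K3.
Proof.
split=> [|a b]; first by rewrite card_ord.
by have [->|ab] := eqVneq a b; [exact: connect0 | exact: connect1].
Qed.

Lemma gamma_c_K3 : gamma_c K3 = 1.
Proof.
have cd0 : connected_dominating K3 [set ord0].
  apply/andP; split.
    apply/forallP => v; rewrite inE; have [//|v0] := eqVneq v ord0.
    by apply/existsP; exists ord0; rewrite inE eqxx.
  apply/forallP => x; apply/implyP => /set1P ->.
  by apply/forallP => y; apply/implyP => /set1P ->.
apply/anti_leq; rewrite (leq_trans (gamma_c_le_card cd0)) ?cards1 //.
rewrite leq_gamma_c ?card_ord // => S /andP[domS _].
by apply: dominating_card_gt0 domS; rewrite card_ord.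
Qed.

Definition mod3 m (x : 'I_m) : 'I_3 := inZp x.

Section CycleOverK3.

Variable k : nat.
Local Notation n := (3 * k).

Lemma mod3_covering : covering_map (cycle_graph n) K3 (@mod3 _).
Proof.
have n3 : n.+3 = 3 * k.+1 by lia.
split=> [x | v].
  by exists (inord x); apply: ord_inj; rewrite /= inordK; have := ltn_ord x; lia.
split=> [u1 u2 | ].
  rewrite !inE !cycle_graphE => vu1 vu2 /(congr1 val) /= u12; apply: ord_inj.
  by move: (ltn_ord u1) (ltn_ord u2) (ltn_ord v); lia.
apply/setP => w; rewrite inE /K3; apply/imsetP/idP => [[u] | vw].
  rewrite inE cycle_graphE => vu ->; rewrite -val_eqE /=.
  by move: (ltn_ord u) (ltn_ord v); lia.
(* As 3 divides n + 3, the residues of v + 1 and v - 1 are the two others. *)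
have vE := val_add1 v; have v'E := val_add1 (v - 1)%R; rewrite subrK in v'E.
have [wE | wE] : w = mod3 (v + 1)%R \/ w = mod3 (v - 1)%R.
  suff : w = (v + 1)%R %% 3 :> nat \/ w = (v - 1)%R %% 3 :> nat.
    by case=> wE; [left | right]; apply: ord_inj.
  have vw' : v %% 3 != w :> nat := vw; move: vE v'E.
  have := ltn_ord (v - 1)%R; have := ltn_ord w; have := ltn_ord v.
  by do 2 case: eqP => ?; lia.
- by exists (v + 1)%R; rewrite // inE /cycle_graph eqxx.
- by exists (v - 1)%R; rewrite // inE /cycle_graph subrK eqxx orbT.
Qed.

Lemma mod3_fibre (x : 'I_3) : #|[set y : 'I_n.+3 | mod3 y == x]| = k.+1.
Proof.
pose f (j : 'I_k.+1) : 'I_n.+3 := inord (3 * j + x).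
have f_val j : f j = 3 * j + x :> nat.
  by rewrite inordK //; have := ltn_ord j; have := ltn_ord x; lia.
have -> : [set y | mod3 y == x] = f @: setT.
  apply/setP => y; rewrite inE; apply/eqP/imsetP => [yx | [j _ ->]].
    have y3 := congr1 val yx; rewrite /= in y3.
    exists (inord (y %/ 3)); rewrite ?inE //; apply: ord_inj.
    by rewrite f_val inordK; have := ltn_ord y; lia.
  by apply: ord_inj; rewrite /= f_val; have := ltn_ord x; lia.
rewrite card_imset ?cardsT ?card_ord // => j1 j2 /(congr1 (@nat_of_ord _)).
by rewrite !f_val => j12; apply: ord_inj; have := ltn_ord x; lia.
Qed.

End CycleOverK3.

Lemma cycle_covers_K3 k : k_fold_cover k.+1 (cycle_graph (3 * k)) K3.
Proof. by exists (@mod3 _); split; [exact: mod3_covering | exact: mod3_fibre]. Qed.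

Theorem theorem2p15 :
  (forall (k : nat) (TF TG : finType) (eF : rel TF) (eG : rel TG),
      simple_graph eF -> simple_graph eG ->
      connected_graph eF -> connected_graph eG ->
      k_fold_cover k eG eF ->
      (gamma_c eG <= k * (gamma_c eF + 2) - 2)%N)
  /\
  (forall k : nat, (0 < k)%N ->
      exists (TF TG : finType) (eF : rel TF) (eG : rel TG),
        simple_graph eF /\ simple_graph eG /\
        connected_graph eF /\ connected_graph eG /\
        k_fold_cover k eG eF /\
        gamma_c eG = (k * (gamma_c eF + 2) - 2)%N).
Proof.
split=> [k TF TG eF eG _ [eG_sym _] eF_conn eG_conn | [//|k] _].
  exact: gamma_c_cover_le.
exists ('I_3 : finType), ('I_(3 * k).+3 : finType), K3, (cycle_graph (3 * k)).
split; first exact: K3_simple.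
split; first exact: cycle_graph_simple.
split; first exact: K3_connected.
split; first exact: cycle_graph_connected.
split; first exact: cycle_covers_K3.
by rewrite gamma_c_K3 gamma_c_cycle; lia.
Qed.
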